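(* There exist a continuum $K$ and a pairwise disjoint sequence $(f_n)_{n\in\mathbb{N}}$ in $C_1(K)$ such that the extension $K((f_n)_{n\in\mathbb{N}})$ is disconnected.
   Context: All spaces are Hausdorff. A continuum is a metrizable, compact, connected space. For a compact space $K$, $C_1(K)$ denotes the set of continuous functions $K\to[0,1]$; $f,g$ are disjoint if $f\cdot g=0$. For a real function $f$ on $K$, $supp(f)$ is the closure of $\{x\in K: f(x)\neq 0\}$. For a pairwise disjoint sequence $(f_n)_{n\in\mathbb{N}}$ in $C_1(K)$, let $D((f_n)_{n\in\mathbb{N}})$ be the union of all open sets $U\subseteq K$ such that $\{n: U\cap supp(f_n)\neq\emptyset\}$ is finite. The extension of $K$ by $(f_n)_{n\in\mathbb{N}}$, denoted $K((f_n)_{n\in\mathbb{N}})$, is the closure in $K\times[0,1]$ of the graph of the function $\sum_{n\in\mathbb{N}} f_n$ restricted to $D((f_n)_{n\in\mathbb{N}})$. *)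

From HB Require Import structures.
From mathcomp Require Import all_boot all_order all_algebra.
From mathcomp Require Import all_classical all_reals all_analysis.
Set Implicit Arguments. Unset Strict Implicit. Unset Printing Implicit Defensive.
Import Order.TTheory GRing.Theory Num.Theory.
Import numFieldNormedType.Exports.
Local Open Scope classical_set_scope.
Local Open Scope ring_scope.

(* Metrizability is rendered by K carrying a pseudometric structure
   (pseudoMetricType R) inducing its topology, plus the Hausdorff property. *)
Definition continuum (R : realType) (K : pseudoMetricType R) : Prop :=
  hausdorff_space K /\ compact [set: K] /\ connected [set: K].

Definition C1 (R : realType) (K : topologicalType) (f : K -> R) : Prop :=
  continuous f /\ forall x, 0 <= f x <= 1.

Definition pairwise_disjoint_seq (R : realType) (K : topologicalType)
  (f : nat -> K -> R) : Prop :=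
  forall n m : nat, n <> m -> forall x, f n x * f m x = 0.

Definition supp (R : realType) (K : topologicalType) (f : K -> R) : set K :=
  closure [set x | f x != 0].

Definition Dset (R : realType) (K : topologicalType) (f : nat -> K -> R) : set K :=
  \bigcup_(U in [set U : set K | open U /\
        finite_set [set n : nat | U `&` supp (f n) !=set0]]) U.

Definition sumf (R : realType) (K : topologicalType) (f : nat -> K -> R) (x : K) : R :=
  \big[+%R/0]_(0 <= n <oo) f n x.

(* K((f_n)): closure in K x [0,1] (subspace of K x R) of the graph of
   \sum_n f_n restricted to D((f_n)). *)
Definition extension (R : realType) (K : topologicalType) (f : nat -> K -> R)
  : set (K * R) :=
  closure [set p : K * R | Dset f p.1 /\ p.2 = sumf f p.1]
  `&` [set p : K * R | p.2 \in `[(0:R), 1]%classic].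

From HB Require Import structures.
From mathcomp Require Import all_boot all_order all_algebra.
From mathcomp Require Import all_classical all_reals all_analysis.
From mathcomp Require Import lra.
Set Implicit Arguments. Unset Strict Implicit. Unset Printing Implicit Defensive.
Import Order.TTheory GRing.Theory Num.Theory.
Import numFieldNormedType.Exports.
Local Open Scope classical_set_scope.
Local Open Scope ring_scope.

(* Take for K the comb {0} x [-1,1] u [0,1] x {1} u {0, 2^-n | n} x [0,1] and
   for f_n a tent around the tooth x = 2^-n multiplied by 1 - y.  Then
   \sum_n f_n is 1 - y on the n-th tooth and 0 elsewhere.  Every neighbourhood
   of a point (0,y) with 0 <= y < 1 meets the supports of almost all f_n, so
   these points lie outside D.  Consequently the continuous function
   (x, y, t) |-> t + y - 1/2 has modulus at least 1/2 on the graph over D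
   (it is 1/2 on the teeth, and y - 1/2 with y = 1 or y < 0 elsewhere), hence
   on its closure; as it takes both signs there, the extension is
   disconnected. *)

Section set_type_topology.
Context {X : topologicalType} (A : set X).

Lemma set_type_hausdorff : hausdorff_space X -> hausdorff_space A.
Proof.
move=> hX p q clpq; apply: val_inj; apply: hX => U V nU nV.
have [k [Uk Vk]] := clpq _ _ (initial_continuous nU) (initial_continuous nV).
by exists (set_val k).
Qed.

Context (a0 : A).

(* ['valL_ a0 id] is a retraction of X onto the subspace type A, continuous on
   A, so global properties of A transfer along it. *)
Lemma set_type_retraction_continuous :
  {within A, continuous ('valL_ a0 (@id A))}.
Proof. by apply/(@subspace_valL_continuousP' X A A a0) => x; exact: cvg_id. Qed.

Lemma set_type_retraction_image : 'valL_ a0 (@id A) @` A = [set: A].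
Proof.
apply/seteqP; split => // k _; exists (set_val k); first exact: set_valP.
by have /= := congr1 (@^~ k) (valLK a0 (@id A)).
Qed.

Lemma set_type_compact : compact A -> compact [set: A].
Proof.
rewrite -set_type_retraction_image => cA.
exact: continuous_compact set_type_retraction_continuous cA.
Qed.

Lemma set_type_connected : connected A -> connected [set: A].
Proof.
rewrite -set_type_retraction_image => cA.
exact: connected_continuous_connected cA set_type_retraction_continuous.
Qed.

End set_type_topology.

Section product_topology.
Context {U V : topologicalType}.

Lemma fst_continuous : continuous (@fst U V).
Proof. by move=> ?; exact: cvg_fst. Qed.

Lemma snd_continuous : continuous (@snd U V).
Proof. by move=> ?; exact: cvg_snd. Qed.

Lemma closed_setX (A : set U) (B : set V) :
  closed A -> closed B -> closed (A `*` B).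
Proof.
move=> cA cB; apply: closedI.
- exact: (proj1 (continuous_closedP _) fst_continuous).
- exact: (proj1 (continuous_closedP _) snd_continuous).
Qed.

Lemma connected_set1X (c : U) (B : set V) :
  connected B -> connected ([set c] `*` B).
Proof.
move=> cB; have -> : [set c] `*` B = pair c @` B.
  by apply/seteqP; split => [[u v] [/= -> Bv]|_ [v Bv <-]]; [exists v|].
apply: connected_continuous_connected cB _; apply: continuous_subspaceT => v.
by apply: cvg_pair; [exact: cvg_cst|exact: cvg_id].
Qed.

Lemma connected_setX1 (A : set U) (c : V) :
  connected A -> connected (A `*` [set c]).
Proof.
move=> cA; have -> : A `*` [set c] = (fun u => (u, c)) @` A.
  by apply/seteqP; split => [[u v] [Au /= ->]|_ [u Au <-]]; [exists u|].
apply: connected_continuous_connected cA _; apply: continuous_subspaceT => u.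
by apply: cvg_pair; [exact: cvg_id|exact: cvg_cst].
Qed.

End product_topology.

Lemma closure_sub_closed {T : topologicalType} {A C : set T} :
  closed C -> A `<=` C -> closure A `<=` C.
Proof. by move=> cC AC; rewrite closureE; exact: smallest_sub. Qed.

Lemma supp_openI (R : realType) (T : topologicalType) (g : T -> R) (U : set T) :
  open U -> (forall x, U x -> g x = 0) -> U `&` supp g = set0.
Proof.
move=> oU g0; rewrite setIC; apply/disjoints_subset.
apply: closure_sub_closed; first exact: open_closedC.
by move=> x /= /eqP gx Ux; apply: gx; exact: g0.
Qed.

Lemma near_infty_infinite (P : set nat) :
  (\forall n \near \oo, P n) -> infinite_set P.
Proof.
move=> [N _ PN]; apply: cofinite_set_infinite; first exact: infinite_nat.
apply: sub_finite_set (finite_II N) => n /= nP.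
by rewrite ltnNge; apply/negP => /PN.
Qed.

Lemma series_single (R : realType) (u : nat -> R) k :
  (forall n, n != k -> u n = 0) -> \big[+%R/0]_(0 <= n <oo) u n = u k.
Proof.
move=> uk; apply: cvg_lim => //; apply: cvg_near_cst.
exists k.+1 => // N /= kN.
by rewrite (bigD1_seq k) ?mem_iota ?iota_uniq ?subn0 //= big1 ?addr0.
Qed.

Lemma not_connected_sign_change (T : topologicalType) (R : realType)
    (g : T -> R) (E : set T) p q :
  continuous g -> (forall z, E z -> g z != 0) -> E p -> E q ->
  0 < g p -> g q < 0 -> ~ connected E.
Proof.
move=> cg E0 Ep Eq gp gq /connected_continuous_connected.
move=> /(_ _ g (continuous_subspaceT cg)) /connected_intervalP gE.
have [|z Ez /eqP gz] := gE _ _ (imageP g Eq) (imageP g Ep) 0.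
  by rewrite !ltW.
by move: gz; apply/negP/E0.
Qed.

Section extension.
Variables (R : realType) (T : topologicalType) (f : nat -> T -> R).

Lemma not_Dset x :
  (forall U, nbhs x U -> \forall n \near \oo, U `&` supp (f n) !=set0) ->
  ~ Dset f x.
Proof.
move=> meets [U [oU finU] Ux].
exact: near_infty_infinite (meets U (open_nbhs_nbhs (conj oU Ux))) finU.
Qed.

Lemma extension_sub (C : set (T * R)) : closed C ->
  [set p | Dset f p.1 /\ p.2 = sumf f p.1] `<=` C -> extension f `<=` C.
Proof. by move=> cC graphC p [/(closure_sub_closed cC graphC)]. Qed.

Lemma extension_graph x :
  Dset f x -> 0 <= sumf f x <= 1 -> extension f (x, sumf f x).
Proof.
move=> Dx s01; split; first exact: subset_closure.
by rewrite /= inE /= in_itv.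
Qed.

End extension.

Section tent.
Variable R : realType.
Implicit Types c r x : R.

Definition tent c r x : R := Num.max 0 (1 - `|x - c| / r).

Lemma tent_center c r : tent c r c = 1.
Proof. by rewrite /tent subrr normr0 mul0r subr0; apply/max_idPr. Qed.

Lemma tent_outside c r x : 0 < r -> r <= `|x - c| -> tent c r x = 0.
Proof.
by move=> r0 rx; apply/max_idPl; rewrite subr_le0 ler_pdivlMr ?mul1r.
Qed.

Lemma tent_continuous c r : continuous (tent c r).
Proof.
apply: max_fun_continuous => [|x]; first exact: cst_continuous.
apply: cvgB; first exact: cvg_cst.
apply: cvgMl; apply: cvg_norm.
by apply: cvgB; [exact: cvg_id|exact: cvg_cst].
Qed.

End tent.

Section comb.
Variable R : realType.

Definition tooth n : R := 2^-1 ^+ n.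

Lemma tooth_gt0 n : 0 < tooth n.
Proof. by rewrite exprn_gt0 // invr_gt0. Qed.

Lemma tooth_ge0 n : 0 <= tooth n.
Proof. exact/ltW/tooth_gt0. Qed.

Lemma tooth_le n m : (n <= m)%N -> tooth m <= tooth n.
Proof.
by move=> nm; apply: ler_wiXn2l => //; rewrite ?invr_ge0 ?invf_le1 ?ler1n.
Qed.

Lemma tooth_le1 n : tooth n <= 1.
Proof. exact: (@tooth_le 0 n). Qed.

Lemma tooth_halve n m : (n < m)%N -> tooth m <= tooth n / 2.
Proof. by move=> nm; rewrite -exprSr; exact: tooth_le. Qed.

Lemma tooth_lt z : 0 < z -> exists N, tooth N < z.
Proof.
move=> z0; have half_lt1 : `|2^-1 : R| < 1.
  by rewrite ger0_norm ?invf_lt1 ?ltr1n.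
have /cvgr_lt/(_ z z0)/filter_ex[N] := cvg_expr half_lt1.
by exists N.
Qed.

Definition comb_base : set R := [set 0] `|` range tooth.

Lemma comb_base_itv : comb_base `<=` `[0, 1].
Proof.
move=> _ [->|[n _ <-]]; rewrite /= in_itv /=.
  by rewrite lexx ler01.
by rewrite tooth_ge0 tooth_le1.
Qed.

Lemma comb_base_bigcap :
  comb_base = \bigcap_(N in [set: nat]) (`[0, tooth N] `|` tooth @` `I_N).
Proof.
apply/seteqP; split => [_ [->|[n _ <-]] N _|x xS].
- by left; rewrite /= in_itv /= lexx tooth_ge0.
- have [nN|Nn] := ltnP n N; first by right; exists n.
  by left; rewrite /= in_itv /= tooth_ge0 tooth_le.
have [-> | x0] := eqVneq x 0; first by left.
have [|[n n0 <-]] := xS 0%N I; last by move: n0; rewrite /= ltn0.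
rewrite /= in_itv /= le_eqVlt eq_sym (negPf x0) /= => /andP[x_gt0 _].
have [N ltNx] := tooth_lt x_gt0.
case: (xS N I) => [|[n _ <-]]; last by right; exists n.
by rewrite /= in_itv /= => /andP[_]; rewrite leNgt ltNx.
Qed.

Lemma comb_base_closed : closed comb_base.
Proof.
rewrite comb_base_bigcap; apply: closed_bigI => N _; apply: closedU.
  exact: itv_closed.
rewrite -bigcup_imset1; apply: closed_bigcup; first exact: finite_II.
by move=> n _; exact: closed_eq.
Qed.

Definition comb : set (R * R) :=
  [set 0] `*` `[-1, 1] `|` `[0, 1] `*` [set 1] `|` comb_base `*` `[0, 1].

Lemma comb_closed : closed comb.
Proof.
have closed_itv (u v : R) : closed `[u, v] by exact: itv_closed.
by apply: closedU; first apply: closedU; apply: closed_setX;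
  exact: closed_eq || exact: closed_itv || exact: comb_base_closed.
Qed.

Lemma comb_compact : compact comb.
Proof.
have I11 := @segment_compact R (-1) 1.
apply: (subclosed_compact comb_closed (compact_setX I11 I11)).
have sub01 : `[0, 1] `<=` `[-1, 1 : R].
  by move=> t; rewrite /= !in_itv /= => /andP[? ?]; lra.
have in11 (t : R) : `|t| <= 1 -> `[-1, 1]%classic t.
  by rewrite ler_norml /= in_itv /= => /andP[? ?]; apply/andP; split; lra.
move=> [x y] [[[/= -> yI]|[xI /= ->]]|[/comb_base_itv xI yI]].
- by split => //; apply: in11; rewrite normr0.
- by split => //=; [exact: sub01|apply: in11; rewrite normr1].
- by split; exact: sub01.
Qed.

Lemma comb_bigcup :
  comb = [set 0] `*` `[-1, 1] `|`
         \bigcup_n (`[0, 1] `*` [set 1] `|` [set tooth n] `*` `[0, 1]).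
Proof.
apply/seteqP; split => [[x y]|[x y]].
- case=> [[Lxy|Txy]|[[/= x0|[n _ /= xn]] yI]].
  + by left.
  + by right; exists 0%N => //; left.
  + left; split => //; move: yI; rewrite /= !in_itv /= => /andP[? ?]; lra.
  + by right; exists n => //; right.
- case=> [Lxy|[n _ [Txy|[/= -> yI]]]].
  + by left; left.
  + by left; right.
  + by right; split => //; right; exists n.
Qed.

Lemma comb_connected : connected comb.
Proof.
have itv01 t : 0 <= t <= 1 -> `[0, 1]%classic t by rewrite /= in_itv.
have itv11 : `[-1, 1]%classic (1 : R) by rewrite /= in_itv /= lexx; lra.
have top0 : (`[0, 1] `*` [set 1]) (0, 1).
  by split => //; apply: itv01; rewrite lexx ler01.
rewrite comb_bigcup; apply: connectedU.
- by exists (0, 1); split; [split|exists 0%N => //; left].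
- exact/connected_set1X/segment_connected.
apply: bigcup_connected; first by exists (0, 1) => n _; left.
move=> n _; apply: connectedU.
- exists (tooth n, 1); split; split => //=; apply: itv01.
    by rewrite tooth_ge0 tooth_le1.
  by rewrite ler01 lexx.
- exact/connected_setX1/segment_connected.
- exact/connected_set1X/segment_connected.
Qed.

Definition spike n : R -> R := tent (tooth n) (tooth n / 2).

Lemma half_tooth_gt0 n : 0 < tooth n / 2.
Proof. by rewrite divr_gt0 ?tooth_gt0. Qed.

Lemma spike_tooth n m : spike n (tooth m) = (n == m)%:R.
Proof.
have [->|nm] := eqVneq n m; first exact: tent_center.
apply: tent_outside; first exact: half_tooth_gt0.
have := tooth_gt0 n; have := tooth_gt0 m.
case: ltngtP nm => // [/tooth_halve|/tooth_halve] halve _ *.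
  by rewrite ler0_norm; lra.
by rewrite ger0_norm; lra.
Qed.

Lemma spike0 n : spike n 0 = 0.
Proof.
apply: tent_outside; first exact: half_tooth_gt0.
have := tooth_gt0 n; rewrite sub0r normrN ger0_norm ?tooth_ge0 //; lra.
Qed.

Lemma spike_right n x : (0 < n)%N -> 3/4 < x -> spike n x = 0.
Proof.
move=> n0 x34; apply: tent_outside; first exact: half_tooth_gt0.
have := tooth_halve n0; have := tooth_gt0 n; rewrite /tooth expr0 => *.
by rewrite ger0_norm; lra.
Qed.

Definition comb_fun n (p : R * R) : R := spike n p.1 * (1 - p.2).

Lemma comb_fun_continuous n : continuous (comb_fun n).
Proof.
move=> p; apply: cvgM.
  by apply: continuous_comp; [exact: cvg_fst|exact: tent_continuous].
by apply: cvgB; [exact: cvg_cst|exact: cvg_snd].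
Qed.

Lemma comb_fun_cases p : comb p ->
  (forall n, comb_fun n p = 0) /\ (p.2 = 1 \/ p.1 = 0 /\ -1 <= p.2 <= 1) \/
  exists j, [/\ p.1 = tooth j, 0 <= p.2 <= 1 &
    forall n, comb_fun n p = (n == j)%:R * (1 - p.2)].
Proof.
rewrite /comb_fun.
case: p => x y [[[/= -> yI]|[_ /= ->]]|[[/= ->|[j _ /= <-]] yI]].
- left; split; first by move=> n; rewrite spike0 mul0r.
  by right; move: yI; rewrite /= in_itv.
- by left; split; [move=> n; rewrite subrr mulr0|left].
- left; split; first by move=> n; rewrite spike0 mul0r.
  by right; split => //; move: yI; rewrite /= !in_itv /= => /andP[? ?]; lra.
- by right; exists j; split => //= n; rewrite spike_tooth.
Qed.

End comb.
Arguments tooth {R} n.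

Section comb_space.
Variable R : realType.

Definition comb_space : pseudoMetricType R := @comb R.
Implicit Types k : comb_space.

Definition comb_bump n k : R := comb_fun n (set_val k).

Lemma comb_top_right : comb (1 : R, 1 : R).
Proof. by left; right; split => //; rewrite /= in_itv /= lexx ler01. Qed.

Lemma comb_bottom_left : comb (0 : R, -1 : R).
Proof. by left; left; split => //; rewrite /= in_itv /= lexx; lra. Qed.

Definition top_right : comb_space := SigSub (mem_set comb_top_right).
Definition bottom_left : comb_space := SigSub (mem_set comb_bottom_left).

Lemma comb_space_continuum : continuum comb_space.
Proof.
split; first exact/set_type_hausdorff/norm_hausdorff.
split; first exact: set_type_compact top_right (@comb_compact R).
exact: set_type_connected top_right (@comb_connected R).
Qed.

Lemma comb_space_fst_continuous : continuous (fun k => (val k).1).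
Proof.
by move=> k; apply: (continuous_comp (f := set_val));
  [exact: initial_continuous|exact: cvg_fst].
Qed.

Lemma comb_space_snd_continuous : continuous (fun k => (val k).2).
Proof.
by move=> k; apply: (continuous_comp (f := set_val));
  [exact: initial_continuous|exact: cvg_snd].
Qed.

Lemma comb_bump_C1 n : C1 (comb_bump n).
Proof.
split=> k; first by apply: (continuous_comp (f := set_val));
  [exact: initial_continuous|exact: comb_fun_continuous].
rewrite /comb_bump.
case: (comb_fun_cases (set_valP k)) => [[-> _]|[j [_ /andP[y0 y1] ->]]].
  by rewrite lexx ler01.
by case: eqP => _; rewrite ?mul1r ?mul0r ?lexx ?ler01 //; apply/andP; split; lra.
Qed.

Lemma comb_bump_disjoint : pairwise_disjoint_seq comb_bump.
Proof.
move=> n m nm k; rewrite /comb_bump.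
case: (comb_fun_cases (set_valP k)) => [[-> _]|[j [_ _ bj]]].
  by rewrite mul0r.
rewrite !bj; case: (eqVneq n j) => [nj|_]; last by rewrite !mul0r.
have /negPf -> : m != j by apply/eqP => mj; apply: nm; rewrite nj mj.
by rewrite mul0r mulr0.
Qed.

Lemma sumf_comb_bump k :
  sumf comb_bump k = 0 /\
    ((val k).2 = 1 \/ (val k).1 = 0 /\ -1 <= (val k).2 <= 1) \/
  sumf comb_bump k = 1 - (val k).2.
Proof.
rewrite /sumf /comb_bump.
case: (comb_fun_cases (set_valP k)) => [[b0 yk]|[j [_ _ bj]]].
  by left; split => //; rewrite (series_single (k := 0%N)) => [|n _]; exact: b0.
right; rewrite (series_single (k := j)) => [|n /negPf nj]; rewrite bj.
  by rewrite eqxx mul1r.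
by rewrite nj mul0r.
Qed.

Lemma axis_not_Dset k :
  (val k).1 = 0 -> 0 <= (val k).2 < 1 -> ~ Dset comb_bump k.
Proof.
case: k => -[x y] /= kP x0 /andP[y0 y1].
apply: not_Dset => U /nbhs_ballP[e e0 eU].
have [N ltNe] := tooth_lt e0; exists N => // n /= Nn.
have tooth_y : comb (tooth n, y).
  by right; split; [right; exists n|rewrite /= in_itv /= y0 ltW].
exists (SigSub (mem_set tooth_y)); split.
  apply: eU; rewrite -initial_ballE /=; split; rewrite /= -ball_normE /=.
    rewrite x0 sub0r normrN ger0_norm ?tooth_ge0 //.
    exact: le_lt_trans (tooth_le R Nn) ltNe.
  by rewrite subrr normr0.
apply: subset_closure; rewrite /= /comb_bump /comb_fun /= spike_tooth eqxx.
by rewrite mul1r subr_eq0 eq_sym lt_eqF.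
Qed.

Definition level (p : comb_space * R) : R := p.2 + (val p.1).2 - 1/2.

Lemma level_continuous : continuous level.
Proof.
move=> p; apply: cvgB; last exact: cvg_cst.
apply: cvgD; first exact: cvg_snd.
apply: (continuous_comp (f := fst) (g := fun k => (val k).2)).
  exact: cvg_fst.
exact: comb_space_snd_continuous.
Qed.

Lemma level_graph_ge k :
  Dset comb_bump k -> 1/2 <= `|level (k, sumf comb_bump k)|.
Proof.
rewrite /level /= => Dk.
case: (sumf_comb_bump k) => [[-> [->|[x0 /andP[ym yp]]]]|->].
- by rewrite ger0_norm; lra.
- have [y0|y0] := ltrP (val k).2 0; first by rewrite ler0_norm; lra.
  have [y1|y1] := ltrP (val k).2 1; last by rewrite ger0_norm; lra.
  by exfalso; apply: axis_not_Dset x0 _ Dk; rewrite y0 y1.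
- by rewrite ger0_norm; lra.
Qed.

Lemma extension_level_neq0 p : extension comb_bump p -> level p != 0.
Proof.
have : extension comb_bump `<=` [set p | 1/2 <= `|level p|].
  apply: extension_sub => [|[k t] [Dk /= ->]]; last exact: level_graph_ge.
  apply: (proj1 (continuous_closedP _) _ _ (@closed_ge R _)) => q.
  by apply: continuous_comp; [exact: level_continuous|exact: norm_continuous].
move=> /[apply] /= lvl; apply/eqP => l0; move: lvl; rewrite l0 normr0; lra.
Qed.

Lemma top_right_Dset : Dset comb_bump top_right.
Proof.
pose U := [set k : comb_space | 3/4 < (val k).1].
have oU : open U.
  exact: (proj1 (continuousP _) comb_space_fst_continuous _ (@open_gt R _)).
exists U; last by rewrite /U /=; lra.
split => //; apply: sub_finite_set (finite_II 1) => n [k kUn].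
rewrite /= ltnNge; apply/negP => n0; move: kUn; rewrite supp_openI //.
by move=> k'; rewrite /U /comb_bump /comb_fun /= => ?; rewrite spike_right ?mul0r.
Qed.

Lemma bottom_left_Dset : Dset comb_bump bottom_left.
Proof.
pose U := [set k : comb_space | (val k).2 < 0].
have oU : open U.
  exact: (proj1 (continuousP _) comb_space_snd_continuous _ (@open_lt R _)).
exists U; last by rewrite /U /=; lra.
split => //; apply: sub_finite_set (finite_II 0) => n [k kUn].
move: kUn; rewrite supp_openI // => k'; rewrite /U /comb_bump /= => y0.
by case: (comb_fun_cases (set_valP k')) => [[->]|[j [_ /andP[]]]] //; lra.
Qed.

Lemma extension_zero k :
  Dset comb_bump k -> (forall n, comb_bump n k = 0) ->
  extension comb_bump (k, 0).
Proof.
move=> Dk b0; have sum0 : sumf comb_bump k = 0.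
  by rewrite /sumf (series_single (k := 0%N)).
by rewrite -sum0; apply: extension_graph; rewrite // sum0 lexx ler01.
Qed.

Lemma comb_extension_disconnected : ~ connected (extension comb_bump).
Proof.
have top : extension comb_bump (top_right, 0).
  apply: extension_zero top_right_Dset _ => n.
  by rewrite /comb_bump /comb_fun /= subrr mulr0.
have bot : extension comb_bump (bottom_left, 0).
  apply: extension_zero bottom_left_Dset _ => n.
  by rewrite /comb_bump /comb_fun /= spike0 mul0r.
apply: (not_connected_sign_change level_continuous extension_level_neq0 top bot).
  by rewrite /level /=; lra.
by rewrite /level /=; lra.
Qed.

End comb_space.
Arguments comb_bump {R} n k.

Theorem theorem4p1 (R : realType) :
  exists (K : pseudoMetricType R) (f : nat -> K -> R),
    continuum K /\ (forall n, C1 (f n)) /\ pairwise_disjoint_seq f /\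
    ~ connected (extension f).
Proof.
exists (comb_space R), comb_bump; split; first exact: comb_space_continuum.
split; first exact: comb_bump_C1.
split; first exact: comb_bump_disjoint.
exact: comb_extension_disconnected.
Qed.
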